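(* Let $k$ be a positive integer. (a) For $n \ge 1$, $\dim_{k,f}(P_n+K_1)=\dim_f(P_n+K_1)$, and this common value equals $\frac{n+1}{2}$ if $n \in\{1,2,3\}$; $\frac{5}{3}$ if $n \in \{4,5\}$; $\frac{n+1}{4}$ if $n \ge 6$ and $n\equiv 1$ or $3\pmod 4$; and $\frac{n+2}{4}$ if $n \ge 6$ and $n\equiv 2\pmod4$. (b) If $n\ge 8$ and $n\equiv 0 \pmod4$, then $\frac{n}{4} \le \dim_{k,f}(P_n+K_1)=\dim_f(P_n+K_1)\le \frac{n+2}{4}$.
   Context: $P_n$ is the path on $n$ vertices, $K_1$ a single vertex, and $G+H$ denotes the join (disjoint union plus all edges between the two graphs). $d(x,y)$ is the distance in $G$. For a function $g$ on $V(G)$ and $U\subseteq V(G)$, $g(U)=\sum_{s\in U}g(s)$. $R\{x,y\}=\{z\in V(G): d(x,z)\ne d(y,z)\}$; a function $g:V(G)\to[0,1]$ is a resolving function if $g(R\{x,y\})\ge1$ for all distinct $x,y$, and $\dim_f(G)$ is the minimum of $g(V(G))$ over resolving functions. For a positive integer $k$, $d_k(x,y)=\min\{d(x,y),k+1\}$, $R_k\{x,y\}=\{z: d_k(x,z)\neq d_k(y,z)\}$; $h:V(G)\to[0,1]$ is a $k$-truncated resolving function if $h(R_k\{x,y\})\ge 1$ for all distinct $x,y$, and $\dim_{k,f}(G)$ is the minimum of $h(V(G))$ over such $h$. *)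

From mathcomp Require Import all_boot all_order all_algebra.
Set Implicit Arguments. Unset Strict Implicit. Unset Printing Implicit Defensive.
Import Order.TTheory GRing.Theory Num.Theory.

(* A (simple) graph is a symmetric irreflexive relation e on a finite type T. *)

Definition ball (T : finType) (e : rel T) (k : nat) (x : T) : {set T} :=
  iter k (fun S => S :|: [set y | [exists z in S, e z y]]) [set x].

(* Graph distance: least k with y in ball k x (falls back to #|T| if y is
   unreachable; irrelevant for the connected graphs considered here). *)
Definition gdist (T : finType) (e : rel T) (x y : T) : nat :=
  find (fun k => y \in ball e k x) (iota 0 #|T|).

Definition tdist (T : finType) (e : rel T) (k : nat) (x y : T) : nat :=
  minn (gdist e x y) k.+1.

Definition resolving_set (T : finType) (d : T -> T -> nat) (x y : T) : {set T} :=
  [set z | d x z != d y z].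

Local Open Scope ring_scope.

Definition resolving_fun (R : realFieldType) (T : finType)
    (d : T -> T -> nat) (g : T -> R) : Prop :=
  (forall s, 0 <= g s <= 1) /\
  (forall x y, x != y -> 1 <= \sum_(z in resolving_set d x y) g z).

Definition is_min_resolving (R : realFieldType) (T : finType)
    (d : T -> T -> nat) (r : R) : Prop :=
  (exists g : T -> R, resolving_fun d g /\ \sum_z g z = r) /\
  (forall g : T -> R, resolving_fun d g -> r <= \sum_z g z).

Definition frac_dim (R : realFieldType) (T : finType) (e : rel T) (r : R) : Prop :=
  is_min_resolving (gdist e) r.

Definition trunc_frac_dim (R : realFieldType) (T : finType) (e : rel T)
    (k : nat) (r : R) : Prop :=
  is_min_resolving (tdist e k) r.

Definition path_rel (n : nat) : rel 'I_n :=
  fun i j => (i.+1 == j :> nat) || (j.+1 == i :> nat).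

Definition K1_rel : rel 'I_1 := fun _ _ => false.

Definition join_rel (T1 T2 : finType) (e1 : rel T1) (e2 : rel T2) : rel (T1 + T2)%type :=
  fun a b => match a, b with
             | inl x, inl y => e1 x y
             | inr x, inr y => e2 x y
             | _, _ => true
             end.

Arguments path_rel : clear implicits.
Definition PnK1 (n : nat) : rel ('I_n + 'I_1)%type := join_rel (@path_rel n) K1_rel.

Definition both_dims (R : realFieldType) (n k : nat) (r : R) : Prop :=
  trunc_frac_dim (@PnK1 n) k r /\ frac_dim (@PnK1 n) r.

From mathcomp Require Import all_boot all_order all_algebra.
From mathcomp Require Import zify ring lra.
Import Order.TTheory GRing.Theory Num.Theory.
Set Implicit Arguments. Unset Strict Implicit. Unset Printing Implicit Defensive.

(* The hub of P_n + K_1 is adjacent to every vertex, so all distances are at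
   most 2; for k >= 1 truncation changes nothing and both dimensions are the
   value of the same linear program.  On the path the resolving sets are
   local: R{a,a+1} is the window {a-1,...,a+2}, R{a,a+2} is
   {a-1,a,a+2,a+3}, a pair at distance >= 3 is resolved by the union of the
   two closed neighbourhoods, and the hub is resolved from a by a and all
   non-neighbours of a.  Lower bounds are nonnegative combinations of the
   window constraints (an LP dual certificate); upper bounds are explicit
   weightings with a common denominator: 1/2 on even vertices for odd n, plus
   the last vertex when n = 2 mod 4, and a weighting with denominator 2m + 1
   when n = 4m, where the dimension is exactly m(2m+2)/(2m+1). *)

Section FanDistance.
Variable n : nat.
Notation T := ('I_n + 'I_1)%type.

Definition hub : T := inr ord0.
(* Indices [i >= n] are sent to the hub. *)
Definition pathv (i : nat) : T := if insub i is Some j then inl j else hub.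

Definition pdist (a i : nat) : nat :=
  if a == i then 0 else if (a.+1 == i) || (i.+1 == a) then 1 else 2.
Definition fan_dist (x y : T) : nat :=
  if x == y then 0 else if PnK1 x y then 1 else 2.

Lemma pathv_val (j : 'I_n) : pathv j = inl j.
Proof. by rewrite /pathv valK. Qed.

Lemma pathvE a (lt_an : a < n) : pathv a = inl (Ordinal lt_an).
Proof. by rewrite -pathv_val. Qed.

Lemma fan_dist_pathv a i : a < n -> i < n -> fan_dist (pathv a) (pathv i) = pdist a i.
Proof. by move=> lt_an lt_in; rewrite (pathvE lt_an) (pathvE lt_in). Qed.

Lemma fan_dist_pathv_hub a : a < n -> fan_dist (pathv a) hub = 1.
Proof. by move=> lt_an; rewrite (pathvE lt_an). Qed.

Lemma fan_dist_hub_pathv a : a < n -> fan_dist hub (pathv a) = 1.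
Proof. by move=> lt_an; rewrite (pathvE lt_an). Qed.

Lemma fan_dist_le2 x y : fan_dist x y <= 2.
Proof. by rewrite /fan_dist; case: ifP => //; case: ifP. Qed.

Lemma fan_ball1 x y : (y \in ball (@PnK1 n) 1 x) = (y == x) || PnK1 x y.
Proof.
rewrite /ball /= !inE; congr (_ || _).
apply/existsP/idP => [[z /andP[]]|xy]; first by rewrite inE => /eqP ->.
by exists x; rewrite inE eqxx.
Qed.

(* Any two vertices have the hub as a common neighbour (or are the hub). *)
Lemma fan_ball2 x y : y \in ball (@PnK1 n) 2 x.
Proof.
rewrite [ball _ 2 x]/ball /= -/(ball _ 1 x) in_setU inE.
case: y => [i|j]; last first.
  by rewrite fan_ball1; case: x => [?|j'] //=; rewrite (ord1 j) (ord1 j') eqxx.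
apply/orP; right; apply/existsP; exists hub; rewrite fan_ball1 andbT.
by case: x => [?|j] //=; rewrite (ord1 j) eqxx.
Qed.

Lemma gdist_fan x y : gdist (@PnK1 n) x y = fan_dist x y.
Proof.
rewrite /gdist /fan_dist card_sum !card_ord addn1.
have [->|neq_xy] := eqVneq x y; first by rewrite /= /ball /= inE eqxx.
have neq_yx : (y == x) = false by rewrite eq_sym (negbTE neq_xy).
have n_gt0 : 0 < n.
  case: x neq_xy {neq_yx} => [i _|j]; first exact: leq_ltn_trans (ltn_ord i).
  case: y => [i _|j']; first exact: leq_ltn_trans (ltn_ord i).
  by rewrite (ord1 j) (ord1 j') eqxx.
case adj_xy: (PnK1 x y).
  rewrite (_ : n.+1 = n.-1.+2); last by lia.
  by rewrite /= /ball /= inE neq_yx -/(ball _ 1 x) fan_ball1 adj_xy orbT.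
have n_gt1 : 1 < n.
  case: x y neq_xy adj_xy {neq_yx} => [i|j] [i'|j'] //=; last first.
    by rewrite (ord1 j) (ord1 j') eqxx.
  move=> neq_ii' _; apply: contraNT neq_ii'; rewrite -leqNgt => n_le1.
  by apply/eqP; congr inl; apply/val_inj; move: (ltn_ord i) (ltn_ord i') => /=; lia.
rewrite (_ : n.+1 = n.-2.+3); last by lia.
by rewrite /= /ball /= inE neq_yx -/(ball _ 1 x) fan_ball1 adj_xy neq_yx -/(ball _ 2 x) fan_ball2.
Qed.

Lemma tdist_fan k x y : 0 < k -> tdist (@PnK1 n) k x y = fan_dist x y.
Proof.
by move=> k_gt0; rewrite /tdist gdist_fan; apply/minn_idPl; have := fan_dist_le2 x y; lia.
Qed.

End FanDistance.

Lemma big_nat_mem (R : Type) (idx : R) (op : Monoid.com_law idx) n s (F : nat -> R) :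
  uniq s -> (forall i, i \in s -> n <= i -> F i = idx) ->
  \big[op/idx]_(0 <= i < n | i \in s) F i = \big[op/idx]_(i <- s) F i.
Proof.
move=> uniq_s F_out.
rewrite -(@big_rmcond_in _ _ op _ s (fun i => i < n)); last first.
  by move=> i s_i; rewrite -leqNgt; apply: F_out.
rewrite -[LHS]big_filter -[RHS]big_filter; apply: perm_big; apply: uniq_perm.
- by rewrite filter_uniq ?iota_uniq.
- by rewrite filter_uniq.
by move=> i; rewrite !mem_filter mem_index_iota andbC.
Qed.

Lemma big_nat_pred_seq (R : Type) (idx : R) (op : Monoid.com_law idx) n (P : pred nat)
    s (F : nat -> R) :
  uniq s -> (forall i, i < n -> P i = (i \in s)) ->
  (forall i, i \in s -> n <= i -> F i = idx) ->
  \big[op/idx]_(0 <= i < n | P i) F i = \big[op/idx]_(i <- s) F i.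
Proof.
move=> uniq_s Ps F_out; rewrite -(@big_nat_mem _ _ _ n) //.
by apply: congr_big_nat => // i /andP[_]; apply: Ps.
Qed.

Lemma resolving_setC (T : finType) (d : T -> T -> nat) x y :
  resolving_set d x y = resolving_set d y x.
Proof. by apply/setP => z; rewrite !inE eq_sym. Qed.

Ltac if_lia := repeat case: ifP; move=> *; lia.
Ltac pdist_solve := rewrite /pdist ?inE; if_lia.

Lemma sep_adj0 i : (pdist 0 i != pdist 1 i) = (i \in [:: 0; 1; 2]).
Proof. by apply/idP/idP; pdist_solve. Qed.

Lemma sep_gap0 i : (pdist 0 i != pdist 2 i) = (i \in [:: 0; 2; 3]).
Proof. by apply/idP/idP; pdist_solve. Qed.

Lemma sep_adj c i : (pdist c.+1 i != pdist c.+2 i) = (i \in [:: c; c.+1; c.+2; c.+3]).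
Proof. by apply/idP/idP; pdist_solve. Qed.

Lemma sep_gap c i : (pdist c.+1 i != pdist c.+3 i) = (i \in [:: c; c.+1; c.+3; c.+4]).
Proof. by apply/idP/idP; pdist_solve. Qed.

Lemma sep_far0 d i : 2 <= d ->
  (pdist 0 i != pdist d.+1 i) = (i \in [:: 0; 1; d; d.+1; d.+2]).
Proof. by move=> ?; apply/idP/idP; pdist_solve. Qed.

Lemma sep_far c d i : c.+3 <= d ->
  (pdist c.+1 i != pdist d.+1 i) = (i \in [:: c; c.+1; c.+2; d; d.+1; d.+2]).
Proof. by move=> ?; apply/idP/idP; pdist_solve. Qed.

(* Sufficient for [h / D] to satisfy the pair constraints: [wc_adj c] and
   [wc_gap c] handle {c+1, c+2} and {c+1, c+3}, and two closed neighbourhoods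
   [wc_nbhd] handle a pair at distance >= 3. *)
Record window_cert (n D : nat) (h : nat -> nat) : Prop := WindowCert {
  wc_out : forall i, n <= i -> h i = 0;
  wc_adj0 : D <= h 0 + h 1 + h 2;
  wc_gap0 : D <= h 0 + h 2 + h 3;
  wc_adj : forall c, c.+2 < n -> D <= h c + h c.+1 + h c.+2 + h c.+3;
  wc_gap : forall c, c.+3 < n -> D <= h c + h c.+1 + h c.+3 + h c.+4;
  wc_nbhd0 : D <= 2 * (h 0 + h 1);
  wc_nbhd : forall c, c.+1 < n -> D <= 2 * (h c + h c.+1 + h c.+2) }.

Section WindowCert.
Variables (n D : nat) (h : nat -> nat).
Hypothesis hc : window_cert n D h.

Lemma cert_sum_seq (P : pred nat) s : uniq s -> (forall i, i < n -> P i = (i \in s)) ->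
  \sum_(0 <= i < n | P i) h i = \sum_(i <- s) h i.
Proof. by move=> uniq_s Ps; apply: big_nat_pred_seq => // i _; apply: (wc_out hc). Qed.

Lemma cert_sep_pair a b : a < b < n ->
  D <= \sum_(0 <= i < n | pdist a i != pdist b i) h i.
Proof.
case: b => [|d]; first by rewrite ltn0.
have [->|neq_da] := eqVneq d a.
  case: a => [|c] /andP[_ lt_cn].
    rewrite (@cert_sum_seq _ [:: 0; 1; 2]) => [||i _]; last by rewrite sep_adj0.
    - by rewrite !big_cons big_nil addn0 !addnA; apply: (wc_adj0 hc).
    - by [].
  rewrite (@cert_sum_seq _ [:: c; c.+1; c.+2; c.+3]) => [||i _]; last by rewrite sep_adj.
  - by rewrite !big_cons big_nil addn0 !addnA; apply: (wc_adj hc).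
  - by rewrite /= !inE; lia.
have [->|neq_da1] := eqVneq d a.+1.
  case: a {neq_da} => [|c] /andP[_ lt_cn].
    rewrite (@cert_sum_seq _ [:: 0; 2; 3]) => [||i _]; last by rewrite sep_gap0.
    - by rewrite !big_cons big_nil addn0 !addnA; apply: (wc_gap0 hc).
    - by [].
  rewrite (@cert_sum_seq _ [:: c; c.+1; c.+3; c.+4]) => [||i _]; last by rewrite sep_gap.
  - by rewrite !big_cons big_nil addn0 !addnA; apply: (wc_gap hc).
  - by rewrite /= !inE; lia.
case/andP=> lt_ad lt_dn; have nbhd_d := wc_nbhd hc (c := d) lt_dn.
case: a lt_ad neq_da neq_da1 => [|c] lt_ad neq_da neq_da1.
  rewrite (@cert_sum_seq _ [:: 0; 1; d; d.+1; d.+2]) => [||i _].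
  - by rewrite !big_cons big_nil; have := wc_nbhd0 hc; lia.
  - by rewrite /= !inE; lia.
  - by rewrite sep_far0 //; lia.
have nbhd_c := wc_nbhd hc (c := c) ltac:(lia).
rewrite (@cert_sum_seq _ [:: c; c.+1; c.+2; d; d.+1; d.+2]) => [||i _].
- by rewrite !big_cons big_nil; lia.
- by rewrite /= !inE; lia.
- by rewrite sep_far //; lia.
Qed.

Lemma cert_sum_le (P : pred nat) s : uniq s -> (forall i, i \in s -> i < n -> P i) ->
  \sum_(i <- s) h i <= \sum_(0 <= i < n | P i) h i.
Proof.
move=> uniq_s sP; rewrite -(@big_nat_mem _ _ _ n) //; last by move=> i _; apply: (wc_out hc).
rewrite big_nat_cond [X in _ <= X]big_nat_cond.
apply: sub_le_big => // [x y|i /andP[/andP[_ lt_in] s_i]]; first exact: leq_addr.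
by rewrite lt_in sP.
Qed.

(* For [n >= 8], some window of four vertices avoids the closed neighbourhood of [a]. *)
Lemma cert_sep_hub a : 8 <= n -> a < n ->
  D <= \sum_(0 <= i < n | pdist a i != 1) h i.
Proof.
move=> n_ge8 lt_an.
have window_le s : uniq s -> (forall i, i \in s -> i < n -> pdist a i != 1) ->
    D <= \sum_(i <- s) h i -> D <= \sum_(0 <= i < n | pdist a i != 1) h i.
  by move=> uniq_s sep_s /leq_trans; apply; apply: cert_sum_le.
have [lt_a4n|le_na4] := ltnP a.+4 n.
  apply: (@window_le [:: a.+2; a.+3; a.+4; a.+4.+1]).
  - by rewrite /= !inE; lia.
  - by move=> i; pdist_solve.
  - by rewrite !big_cons big_nil addn0 !addnA; apply: (wc_adj hc).
have [lt_4a|le_a4] := ltnP 4 a.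
  apply: (@window_le [:: a - 5; (a - 5).+1; (a - 5).+2; (a - 5).+3]).
  - by rewrite /= !inE; lia.
  - by move=> i; pdist_solve.
  - by rewrite !big_cons big_nil addn0 !addnA; apply: (wc_adj hc); lia.
apply: (@window_le [:: 0; 1; 2]).
- by [].
- by move=> i; pdist_solve.
- by rewrite !big_cons big_nil addn0 !addnA; apply: (wc_adj0 hc).
Qed.

End WindowCert.

(* The conditions of [resolving_fanP] for the weights [h i / D] on the path and
   [hv / D] on the hub, with the denominator cleared. *)
Definition nat_resolving (n D : nat) (h : nat -> nat) (hv : nat) : Prop :=
  [/\ 0 < D, forall i, i < n -> h i <= D, hv <= D,
      forall a b, a < b < n -> D <= \sum_(0 <= i < n | pdist a i != pdist b i) h i &
      forall a, a < n -> D <= \sum_(0 <= i < n | pdist a i != 1) h i + hv].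

Lemma cert_nat_resolving n D h : window_cert n D h -> 0 < D ->
  (forall i, i < n -> h i <= D) ->
  (forall a, a < n -> D <= \sum_(0 <= i < n | pdist a i != 1) h i) ->
  nat_resolving n D h 0.
Proof.
move=> hc D_gt0 h_le sep_hub; split=> // [a b|a /sep_hub].
  exact: cert_sep_pair.
by rewrite addn0.
Qed.

Lemma nat_resolving_check n D h hv :
  [&& 0 < D, hv <= D, all (fun i => h i <= D) (iota 0 n),
      all (fun a => all (fun b => D <= \sum_(0 <= i < n | pdist a i != pdist b i) h i)
                        (iota a.+1 (n - a.+1))) (iota 0 n)
    & all (fun a => D <= \sum_(0 <= i < n | pdist a i != 1) h i + hv) (iota 0 n)] ->
  nat_resolving n D h hv.
Proof.
case/and5P=> D_gt0 hv_le /allP h_le /allP sep_pair /allP sep_hub; split=> //.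
- by move=> i lt_in; apply: h_le; rewrite mem_iota.
- move=> a b /andP[lt_ab lt_bn].
  by have /allP := sep_pair a ltac:(rewrite mem_iota; lia); apply; rewrite mem_iota; lia.
- by move=> a lt_an; apply: sep_hub; rewrite mem_iota.
Qed.

Lemma sum_even N : \sum_(0 <= i < N) (if odd i then 0 else 1) = N.+1./2.
Proof. by elim: N => [|N IH]; rewrite ?big_nil // big_nat_recr //= IH; case: ifP; lia. Qed.

Definition even_weight n i : nat := if i < n then (if odd i then 0 else 1) else 0.

Lemma even_weight_cert n : odd n -> 3 <= n -> window_cert n 2 (even_weight n).
Proof. by move=> *; split=> *; rewrite /even_weight; if_lia. Qed.

Lemma sum_even_weight n : \sum_(0 <= i < n) even_weight n i = n.+1./2.
Proof.
by rewrite -sum_even; apply: eq_big_nat => i /andP[_ lt_in]; rewrite /even_weight lt_in.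
Qed.

Definition even_last_weight n i : nat :=
  if i < n then (if odd i then (if i.+1 == n then 1 else 0) else 1) else 0.

Lemma even_last_weight_cert n : ~~ odd n -> 4 <= n -> window_cert n 2 (even_last_weight n).
Proof. by move=> *; split=> *; rewrite /even_last_weight; if_lia. Qed.

Lemma sum_even_last_weight n : 0 < n -> ~~ odd n ->
  \sum_(0 <= i < n) even_last_weight n i = n./2.+1.
Proof.
move=> n_gt0 even_n; rewrite -[in \sum_(0 <= i < n) _](prednK n_gt0) big_nat_recr //=.
rewrite (@eq_big_nat _ _ _ _ _ _ (fun i => if odd i then 0 else 1)) => [|i /andP[_ lt_i]].
  by rewrite sum_even /even_last_weight; if_lia.
by rewrite /even_last_weight; if_lia.
Qed.

Definition quarter_weight m i : nat :=
  if i < 4 * m then (if odd i then i %/ 4 + 1 else m - i %/ 4) else 0.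

Lemma quarter_weight_cert m : 2 <= m -> window_cert (4 * m) (2 * m + 1) (quarter_weight m).
Proof. by move=> *; split=> *; rewrite /quarter_weight; if_lia. Qed.

Lemma sum_quarter_weight m c : c <= m ->
  \sum_(0 <= i < 4 * c) quarter_weight m i = c * (2 * m + 2).
Proof.
elim: c => [|c IH] le_cm; first by rewrite big_nil.
rewrite (_ : 4 * c.+1 = (4 * c).+4); last by lia.
rewrite 4?big_nat_recr //= IH; last by lia.
by rewrite /quarter_weight; if_lia.
Qed.

Local Open Scope ring_scope.

Lemma is_min_resolving_ext (R : realFieldType) (T : finType) (d1 d2 : T -> T -> nat) (r : R) :
  d1 =2 d2 -> is_min_resolving d2 r -> is_min_resolving d1 r.
Proof.
move=> d12; have eq_res x y : resolving_set d1 x y = resolving_set d2 x y.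
  by apply/setP => z; rewrite !inE !d12.
have eq_fun g : resolving_fun d1 g <-> resolving_fun d2 g.
  by split=> -[g01 gres]; split=> // x y /gres; rewrite eq_res.
by case=> [[g [/eq_fun g_res g_sum]] g_min]; split=> [|h /eq_fun]; [exists g | apply: g_min].
Qed.

Lemma both_dims_fan (R : realFieldType) n k (r : R) : (0 < k)%N ->
  is_min_resolving (@fan_dist n) r -> both_dims n k r.
Proof.
move=> k_gt0 r_min; split; apply: is_min_resolving_ext r_min => x y.
  exact: tdist_fan.
exact: gdist_fan.
Qed.

Section FanWeights.
Variables (R : realFieldType) (n : nat).
Notation T := ('I_n + 'I_1)%type.
Implicit Types (g : T -> R) (a b i : nat).

Definition path_weight g i : R := if insub i is Some j then g (inl j) else 0.

Lemma path_weight_ord g (j : 'I_n) : path_weight g j = g (inl j).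
Proof. by rewrite /path_weight valK. Qed.

Lemma path_weight_out g i : (n <= i)%N -> path_weight g i = 0.
Proof. by move=> n_le_i; rewrite /path_weight insubN // -leqNgt. Qed.

Lemma sum_fan_cond (P : pred T) g :
  \sum_(z | P z) g z =
  \sum_(0 <= i < n | P (pathv n i)) path_weight g i + (if P (hub n) then g (hub n) else 0).
Proof.
rewrite big_sumType big_mkord; congr (_ + _); last by rewrite big_mkcond big_ord1.
by apply: eq_big => [j|j _]; rewrite ?path_weight_ord // (pathv_val j).
Qed.

Lemma sum_fan g : \sum_z g z = \sum_(0 <= i < n) path_weight g i + g (hub n).
Proof. by rewrite sum_fan_cond. Qed.

Lemma sum_resolving_pathv g a b : (a < n)%N -> (b < n)%N ->
  \sum_(z in resolving_set (@fan_dist n) (pathv n a) (pathv n b)) g z =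
  \sum_(0 <= i < n | pdist a i != pdist b i) path_weight g i.
Proof.
move=> lt_an lt_bn; rewrite sum_fan_cond !inE !fan_dist_pathv_hub // eqxx addr0.
by apply: congr_big_nat => // i /andP[_ lt_in]; rewrite inE !fan_dist_pathv.
Qed.

Lemma sum_resolving_pathv_hub g a : (a < n)%N ->
  \sum_(z in resolving_set (@fan_dist n) (pathv n a) (hub n)) g z =
  \sum_(0 <= i < n | pdist a i != 1%N) path_weight g i + g (hub n).
Proof.
move=> lt_an; rewrite sum_fan_cond !inE fan_dist_pathv_hub //; congr (_ + _).
by apply: congr_big_nat => // i /andP[_ lt_in]; rewrite inE fan_dist_pathv ?fan_dist_hub_pathv.
Qed.

Lemma resolving_fanP g :
  resolving_fun (@fan_dist n) g <->
  [/\ forall z, 0 <= g z <= 1,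
      forall a b, (a < b < n)%N ->
        1 <= \sum_(0 <= i < n | pdist a i != pdist b i) path_weight g i &
      forall a, (a < n)%N ->
        1 <= \sum_(0 <= i < n | pdist a i != 1%N) path_weight g i + g (hub n)].
Proof.
split=> [[g01 g_res]|[g01 sep_pair sep_hub]].
  split=> // [a b /andP[lt_ab lt_bn]|a lt_an].
    have lt_an := ltn_trans lt_ab lt_bn.
    rewrite -sum_resolving_pathv //; apply: g_res.
    by rewrite (pathvE lt_an) (pathvE lt_bn); apply/eqP => -[eq_ab]; rewrite eq_ab ltnn in lt_ab.
  by rewrite -sum_resolving_pathv_hub //; apply: g_res; rewrite pathvE.
split=> // x y; case: x => [i|j]; case: y => [i'|j'];
  rewrite -?pathv_val ?(ord1 j) ?(ord1 j') -/(hub n) => neq_xy.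
- have neq_ii' : (i : nat) != i' by apply: contraNneq neq_xy => ->.
  wlog lt_ii' : i i' {neq_xy} neq_ii' / (i < i')%N.
    move=> wlog_lt; have [lt_ii'|lt_i'i|/eqP] := ltngtP i i'; first exact: wlog_lt.
      by rewrite resolving_setC; apply: wlog_lt; rewrite // eq_sym.
    by rewrite (negbTE neq_ii').
  by rewrite sum_resolving_pathv //; apply: sep_pair; rewrite lt_ii' /=.
- by rewrite sum_resolving_pathv_hub //; apply: sep_hub.
- by rewrite resolving_setC sum_resolving_pathv_hub //; apply: sep_hub.
- by rewrite eqxx in neq_xy.
Qed.

End FanWeights.

(* [wi_adj c] and [wi_gap c] are the constraints of the pairs {c+1, c+2} and
   {c+1, c+3}; [wi_adj0] and [wi_gap0] those of {0, 1} and {0, 2}. *)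
Record window_ineqs (R : realFieldType) (n : nat) (f : nat -> R) : Prop := WindowIneqs {
  wi_out : forall i, (n <= i)%N -> f i = 0;
  wi_ge0 : forall i, 0 <= f i;
  wi_adj0 : 1 <= f 0%N + f 1%N + f 2%N;
  wi_gap0 : 1 <= f 0%N + f 2%N + f 3%N;
  wi_adj : forall c, (c.+2 < n)%N -> 1 <= f c + f c.+1 + f c.+2 + f c.+3;
  wi_gap : forall c, (c.+3 < n)%N -> 1 <= f c + f c.+1 + f c.+3 + f c.+4 }.

Section ResolvingWindows.
Variables (R : realFieldType) (n : nat) (g : ('I_n + 'I_1)%type -> R).
Hypothesis g_res : resolving_fun (@fan_dist n) g.

Lemma resolving_sum_seq a b s : (a < b < n)%N -> uniq s ->
  (forall i, (i < n)%N -> (pdist a i != pdist b i) = (i \in s)) ->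
  1 <= \sum_(i <- s) path_weight g i.
Proof.
have [_ sep_pair _] := (resolving_fanP g).1 g_res.
move=> lt_abn uniq_s sep_s; rewrite -(big_nat_pred_seq _ uniq_s sep_s).
  exact: sep_pair.
by move=> i _; apply: path_weight_out.
Qed.

Lemma resolving_window_ineqs : (3 <= n)%N -> window_ineqs n (path_weight g).
Proof.
move=> n_ge3; have [g01 _ _] := (resolving_fanP g).1 g_res.
split=> [i|i|||c lt_cn|c lt_cn].
- exact: path_weight_out.
- by rewrite /path_weight; case: insubP => // j _ _; case/andP: (g01 (inl j)).
- have := @resolving_sum_seq 0 1 [:: 0; 1; 2]%N.
  rewrite !big_cons big_nil addr0 !addrA.
  by apply=> [|//|i _]; [lia | rewrite sep_adj0].
- have := @resolving_sum_seq 0 2 [:: 0; 2; 3]%N.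
  rewrite !big_cons big_nil addr0 !addrA.
  by apply=> [|//|i _]; [lia | rewrite sep_gap0].
- have := @resolving_sum_seq c.+1 c.+2 [:: c; c.+1; c.+2; c.+3].
  rewrite !big_cons big_nil addr0 !addrA.
  by apply=> [||i _]; [lia | rewrite /= !inE; lia | rewrite sep_adj].
- have := @resolving_sum_seq c.+1 c.+3 [:: c; c.+1; c.+3; c.+4].
  rewrite !big_cons big_nil addr0 !addrA.
  by apply=> [||i _]; [lia | rewrite /= !inE; lia | rewrite sep_gap].
Qed.

End ResolvingWindows.

Section LowerBounds.
Variables (R : realFieldType) (n : nat) (f : nat -> R).
Hypothesis wf : window_ineqs n f.

Lemma sum_nat_out N : (n <= N)%N -> \sum_(0 <= i < N) f i = \sum_(0 <= i < n) f i.
Proof.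
move=> le_nN; rewrite (big_cat_nat _ (n := n)) //= [X in _ + X]big1_seq ?addr0 //.
by move=> i /andP[_]; rewrite mem_index_iota => /andP[le_ni _]; apply: (wi_out wf).
Qed.

Lemma sum_adj_windows s0 t : (s0 + 4 * t <= n.+1)%N ->
  \sum_(0 <= i < s0) f i + t%:R <= \sum_(0 <= i < s0 + 4 * t) f i.
Proof.
elim: t => [|t IH] le_n; first by rewrite addr0 muln0 addn0.
rewrite (_ : s0 + 4 * t.+1 = (s0 + 4 * t).+4)%N; last by lia.
rewrite 4?big_nat_recr //= -natr1.
have := wi_adj wf (c := s0 + 4 * t) ltac:(lia); have := IH ltac:(lia); lra.
Qed.

Lemma sum_first3 : \sum_(0 <= i < 3) f i = f 0%N + f 1%N + f 2%N.
Proof. by rewrite !big_nat_recr //= big_nil add0r. Qed.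

Lemma lb_3mod4 m : n = (4 * m + 3)%N -> m.+1%:R <= \sum_(0 <= i < n) f i.
Proof.
move=> En; have := @sum_adj_windows 3 m ltac:(lia).
rewrite sum_first3 (_ : 3 + 4 * m = n)%N; last by lia.
by rewrite -natr1; have := wi_adj0 wf; lra.
Qed.

Lemma lb_2mod4 m : n = (4 * m + 2)%N -> m.+1%:R <= \sum_(0 <= i < n) f i.
Proof.
move=> En; have := @sum_adj_windows 3 m ltac:(lia).
rewrite sum_first3 sum_nat_out; last by lia.
by rewrite -natr1; have := wi_adj0 wf; lra.
Qed.

(* The first six weights carry 3/2: the windows {0,1,3,4}, {2,...,5} and
   {0,1,2} cover them at most twice. *)
Lemma lb_1mod4 m : (2 <= m)%N -> n = (4 * m + 1)%N ->
  m%:R + 1 / 2 <= \sum_(0 <= i < n) f i.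
Proof.
move=> m_ge2 En; have := @sum_adj_windows 6 m.-1 ltac:(lia).
rewrite (@sum_nat_out (6 + 4 * m.-1)); last by lia.
rewrite !big_nat_recr //= big_nil add0r.
have := wi_gap wf (c := 0%N) ltac:(lia); have := wi_adj wf (c := 2%N) ltac:(lia).
have := wi_adj0 wf; have := wi_ge0 wf 5.
have -> : m%:R = m.-1%:R + 1 :> R by rewrite natr1 prednK // ltnW.
lra.
Qed.

(* The LP dual certificate for [n = 4m], built four vertices at a time. *)
Lemma lb_0mod4_invariant m c : n = (4 * m)%N -> (c < m)%N ->
  c.+1%:R * (2 * m%:R + 2) <=
  (2 * m%:R + 1) * \sum_(0 <= i < 4 * c + 3) f i
  + (2 * c%:R + 3) * f (4 * c + 3)%N + (2 * c%:R + 2) * f (4 * c + 4)%N.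
Proof.
move=> En; elim: c => [|c IH] lt_cm.
  rewrite muln0 !add0n sum_first3 mulr0 !add0r.
  have m_ge1 : 1 <= m%:R :> R by rewrite ler1n.
  have adj0 := wi_adj0 wf; have gap0 := wi_gap0 wf.
  have adj1 := wi_adj wf (c := 1%N) ltac:(lia).
  have gap0' := wi_gap wf (c := 0%N) ltac:(lia).
  have : 0 <= (2 * m%:R - 1) * (f 0%N + f 1%N + f 2%N - 1) by apply: mulr_ge0; lra.
  lra.
have {IH} := IH (ltnW lt_cm); set N := (4 * c + 3)%N => IH.
rewrite (_ : 4 * c.+1 + 3 = N.+4)%N; last by rewrite /N; lia.
rewrite (_ : 4 * c.+1 + 4 = N.+4.+1)%N; last by rewrite /N; lia.
rewrite (_ : 4 * c + 4 = N.+1)%N in IH; last by rewrite /N; lia.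
rewrite 4?big_nat_recr //= -natr1.
have adjN := wi_adj wf (c := N) ltac:(rewrite /N; lia).
have adjN2 := wi_adj wf (c := N.+2) ltac:(rewrite /N; lia).
have gapN := wi_gap wf (c := N) ltac:(rewrite /N; lia).
have gapN1 := wi_gap wf (c := N.+1) ltac:(rewrite /N; lia).
have le_cm : c%:R + 1 + 1 <= m%:R :> R by rewrite !natr1 ler_nat.
have : 0 <= (2 * m%:R - 3 - 2 * c%:R) * (f N + f N.+1 + f N.+2 + f N.+3 - 1).
  by apply: mulr_ge0; lra.
have : 0 <= (2 * c%:R + 3) * (f N.+2 + f N.+3 + f N.+4 + f N.+4.+1 - 1).
  by apply: mulr_ge0; have := ler0n R c; lra.
lra.
Qed.

Lemma lb_0mod4 m : (1 <= m)%N -> n = (4 * m)%N ->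
  m%:R * (2 * m%:R + 2) / (2 * m%:R + 1) <= \sum_(0 <= i < n) f i.
Proof.
move=> m_gt0 En; have := @lb_0mod4_invariant m m.-1 En ltac:(lia).
rewrite (_ : 4 * m.-1 + 3 = n.-1)%N; last by lia.
rewrite (_ : 4 * m.-1 + 4 = n)%N; last by lia.
rewrite (wi_out wf (leqnn n)) mulr0 addr0 prednK // => inv.
rewrite -(prednK (_ : 0 < n)%N) ?big_nat_recr //=; last by lia.
have m_ge1 : 1 <= m%:R :> R by rewrite ler1n.
have coef : 2 * m.-1%:R + 3 = 2 * m%:R + 1 :> R.
  by rewrite -[in RHS](prednK m_gt0) -natr1; ring.
rewrite coef in inv.
by rewrite ler_pdivrMr; lra.
Qed.

End LowerBounds.

Section RatioWeights.
Variables (R : realFieldType) (n D : nat) (h : nat -> nat) (hv : nat).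
Hypothesis D_gt0 : (0 < D)%N.

Definition ratio_fun (z : 'I_n + 'I_1) : R :=
  if z is inl i then (h i)%:R / D%:R else hv%:R / D%:R.

Lemma ler1_ratio x : (1 <= x%:R / D%:R :> R) = (D <= x)%N.
Proof. by rewrite ler_pdivlMr ?ltr0n // mul1r ler_nat. Qed.

Lemma ratio_01 x : (x <= D)%N -> 0 <= (x%:R / D%:R : R) <= 1.
Proof. by move=> le_xD; rewrite divr_ge0 ?ler0n //= ler_pdivrMr ?ltr0n // mul1r ler_nat. Qed.

Lemma sum_ratio_path (P : pred nat) :
  \sum_(0 <= i < n | P i) path_weight ratio_fun i = (\sum_(0 <= i < n | P i) h i)%:R / D%:R.
Proof.
rewrite natr_sum mulr_suml; apply: congr_big_nat => // i /andP[_ /andP[_ lt_in]].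
by rewrite /path_weight insubT.
Qed.

Lemma ratio_resolving : nat_resolving n D h hv -> resolving_fun (@fan_dist n) ratio_fun.
Proof.
case=> _ h_le hv_le sep_pair sep_hub; apply/resolving_fanP; split.
- by case=> [i|j]; apply: ratio_01; [apply: h_le |].
- by move=> a b lt_abn; rewrite sum_ratio_path ler1_ratio; apply: sep_pair.
- by move=> a lt_an; rewrite sum_ratio_path /= -mulrDl -natrD ler1_ratio; apply: sep_hub.
Qed.

Lemma sum_ratio_fun : \sum_z ratio_fun z = (\sum_(0 <= i < n) h i + hv)%:R / D%:R.
Proof. by rewrite sum_fan (sum_ratio_path xpredT) /= -mulrDl -natrD. Qed.

End RatioWeights.

Lemma is_min_resolving_nat (R : realFieldType) n D h hv (r : R) :
  nat_resolving n D h hv -> (\sum_(0 <= i < n) h i + hv)%:R / D%:R = r ->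
  (forall g, resolving_fun (@fan_dist n) g -> r <= \sum_z g z) ->
  is_min_resolving (@fan_dist n) r.
Proof.
move=> hres <- lb; split=> //; have [D_gt0 _ _ _ _] := hres.
by exists (@ratio_fun R n D h hv); rewrite sum_ratio_fun //; split=> //; apply: ratio_resolving.
Qed.

Lemma resolving_lb_of_windows (R : realFieldType) n (r : R) : (3 <= n)%N ->
  (forall f, window_ineqs n f -> r <= \sum_(0 <= i < n) f i) ->
  forall g, resolving_fun (@fan_dist n) g -> r <= \sum_z g z.
Proof.
move=> n_ge3 lb g g_res; have [g01 _ _] := (resolving_fanP g).1 g_res.
have /andP[g_hub_ge0 _] := g01 (hub n).
by rewrite sum_fan; apply: ler_wpDr => //; apply: lb; apply: resolving_window_ineqs.
Qed.

Lemma fan_dim_odd (R : realFieldType) n : (6 <= n)%N -> odd n ->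
  is_min_resolving (@fan_dist n) ((n.+1)%:R / 4 : R).
Proof.
move=> n_ge6 odd_n; have hc := even_weight_cert odd_n ltac:(lia).
apply: (@is_min_resolving_nat _ n 2%N (even_weight n) 0%N).
- apply: cert_nat_resolving => [//|//|i _|a lt_an].
    by rewrite /even_weight; if_lia.
  have [n_ge8|n_lt8] := leqP 8 n; first exact: cert_sep_hub.
  have n7 : n = 7%N by lia.
  by move: lt_an; rewrite n7; case: a => [|[|[|[|[|[|[|a]]]]]]] //= _; rewrite unlock.
- have Eh : n.+1 = (2 * n.+1./2)%N by lia.
  by rewrite addn0 sum_even_weight [in RHS]Eh natrM; lra.
apply: resolving_lb_of_windows => [|f wf]; first lia.
have [m [Em|Em]] : exists m, n = (4 * m + 3)%N \/ n = (4 * m + 1)%N.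
- by exists (n %/ 4)%N; lia.
- have -> : n.+1%:R / 4 = m.+1%:R :> R.
    by rewrite Em (_ : (4 * m + 3).+1 = 4 * m.+1)%N ?natrM; [lra | lia].
  exact: (lb_3mod4 wf Em).
- have -> : n.+1%:R / 4 = m%:R + 1 / 2 :> R.
    by rewrite Em (_ : (4 * m + 1).+1 = 4 * m + 2)%N ?natrD ?natrM; [lra | lia].
  exact: (lb_1mod4 wf (m := m) ltac:(lia) Em).
Qed.

Lemma fan_dim_2mod4 (R : realFieldType) n : (6 <= n)%N -> (n %% 4 = 2)%N ->
  is_min_resolving (@fan_dist n) ((n.+2)%:R / 4 : R).
Proof.
move=> n_ge6 n_mod4; have even_n : ~~ odd n by apply/negP => odd_n; lia.
have hc := even_last_weight_cert even_n ltac:(lia).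
apply: (@is_min_resolving_nat _ n 2%N (even_last_weight n) 0%N).
- apply: cert_nat_resolving => [//|//|i _|a lt_an].
    by rewrite /even_last_weight; if_lia.
  have [n_ge8|n_lt8] := leqP 8 n; first exact: cert_sep_hub.
  have n6 : n = 6%N by lia.
  by move: lt_an; rewrite n6; case: a => [|[|[|[|[|[|a]]]]]] //= _; rewrite unlock.
- rewrite addn0 sum_even_last_weight //; last by lia.
  have Eh : n.+2 = (2 * n./2.+1)%N by lia.
  by rewrite [in RHS]Eh natrM; lra.
apply: resolving_lb_of_windows => [|f wf]; first lia.
have Em : n = (4 * (n %/ 4) + 2)%N by lia.
have -> : n.+2%:R / 4 = (n %/ 4)%N.+1%:R :> R.
  by rewrite [in LHS]Em (_ : (4 * (n %/ 4) + 2).+2 = 4 * (n %/ 4).+1)%N ?natrM; [lra | lia].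
exact: (lb_2mod4 wf Em).
Qed.

Lemma fan_dim_0mod4 (R : realFieldType) m : (2 <= m)%N ->
  is_min_resolving (@fan_dist (4 * m)) (m%:R * (2 * m%:R + 2) / (2 * m%:R + 1) : R).
Proof.
move=> m_ge2; have hc := quarter_weight_cert m_ge2.
apply: (@is_min_resolving_nat _ _ (2 * m + 1)%N (quarter_weight m) 0%N).
- apply: cert_nat_resolving => //.
  + by rewrite addn1.
  + by move=> i _; rewrite /quarter_weight; if_lia.
  + by move=> a lt_an; apply: (cert_sep_hub hc) => //; lia.
- by rewrite addn0 (sum_quarter_weight (leqnn m)) natrM !(natrD _ (2 * m)) !natrM.
apply: resolving_lb_of_windows => [|f wf]; first lia.
exact: (lb_0mod4 wf (ltnW m_ge2) erefl).
Qed.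

Lemma fan_dim_le3 (R : realFieldType) n : (1 <= n <= 3)%N ->
  is_min_resolving (@fan_dist n) (n.+1%:R / 2 : R).
Proof.
case/andP; case: n => [//|[_ _|[_ _|[_ _|//]]]].
- apply: (@is_min_resolving_nat _ _ 1%N (nth 0%N [:: 1%N]) 0%N).
  + by apply: nat_resolving_check; rewrite unlock.
  + by rewrite unlock /=; lra.
  move=> g /resolving_fanP[_ _ sep_hub].
  by have := sep_hub 0%N isT; rewrite sum_fan unlock /=; lra.
- apply: (@is_min_resolving_nat _ _ 2%N (nth 0%N [:: 1; 1]%N) 1%N).
  + by apply: nat_resolving_check; rewrite unlock.
  + by rewrite unlock /=; lra.
  move=> g /resolving_fanP[_ sep_pair sep_hub].
  have := sep_pair 0%N 1%N isT; have := sep_hub 0%N isT; have := sep_hub 1%N isT.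
  by rewrite sum_fan unlock /=; lra.
- apply: (@is_min_resolving_nat _ _ 1%N (nth 0%N [:: 0; 0; 1]%N) 1%N).
  + by apply: nat_resolving_check; rewrite unlock.
  + by rewrite unlock /=; lra.
  move=> g /resolving_fanP[_ sep_pair sep_hub].
  have := sep_pair 0%N 2%N isT; have := sep_hub 1%N isT.
  by rewrite sum_fan unlock /=; lra.
Qed.

Lemma fan_dim_45 (R : realFieldType) n : (4 <= n <= 5)%N ->
  is_min_resolving (@fan_dist n) (5 / 3 : R).
Proof.
case/andP; case: n => [//|[//|[//|[//|[_ _|[_ _|//]]]]]].
- apply: (@is_min_resolving_nat _ _ 3%N (nth 0%N [:: 1; 1; 1; 1]%N) 1%N).
  + by apply: nat_resolving_check; rewrite unlock.
  + by rewrite unlock /=; lra.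
  move=> g /resolving_fanP[_ sep_pair sep_hub].
  have := sep_pair 0%N 1%N isT; have := sep_pair 0%N 2%N isT.
  have := sep_hub 1%N isT; have := sep_hub 2%N isT.
  by rewrite sum_fan unlock /=; lra.
- apply: (@is_min_resolving_nat _ _ 6%N (nth 0%N [:: 1; 2; 3; 2; 1]%N) 1%N).
  + by apply: nat_resolving_check; rewrite unlock.
  + by rewrite unlock /=; lra.
  move=> g /resolving_fanP[_ sep_pair sep_hub].
  have := sep_pair 0%N 1%N isT; have := sep_pair 3%N 4%N isT.
  have := sep_hub 1%N isT; have := sep_hub 2%N isT; have := sep_hub 3%N isT.
  by rewrite sum_fan unlock /=; lra.
Qed.

Lemma quarter_value_bounds (R : realFieldType) (x : R) : 0 <= x ->
  x <= x * (2 * x + 2) / (2 * x + 1) <= x + 1 / 2.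
Proof.
by move=> x_ge0; apply/andP; split; [rewrite ler_pdivlMr | rewrite ler_pdivrMr]; nra.
Qed.

Theorem theorem3p3 (R : realFieldType) (k : nat) (hk : (0 < k)%N) :
  (* (a) *)
  (forall n : nat, (1 <= n <= 3)%N ->
     both_dims n k ((n.+1)%:R / 2 : R)) /\
  (forall n : nat, (4 <= n <= 5)%N ->
     both_dims n k (5 / 3 : R)) /\
  (forall n : nat, (6 <= n)%N -> (n %% 4 == 1)%N || (n %% 4 == 3)%N ->
     both_dims n k ((n.+1)%:R / 4 : R)) /\
  (forall n : nat, (6 <= n)%N -> (n %% 4 == 2)%N ->
     both_dims n k ((n.+2)%:R / 4 : R)) /\
  (* (b) *)
  (forall n : nat, (8 <= n)%N -> (n %% 4 == 0)%N ->
     exists v : R, both_dims n k v /\ n%:R / 4 <= v <= (n.+2)%:R / 4).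
Proof.
split; first by move=> n /(fan_dim_le3 R)/(both_dims_fan hk).
split; first by move=> n /(fan_dim_45 R)/(both_dims_fan hk).
split; first by move=> n n_ge6 n_mod4; apply/(both_dims_fan hk)/fan_dim_odd => //; lia.
split; first by move=> n n_ge6 /eqP n_mod4; apply/(both_dims_fan hk)/fan_dim_2mod4.
move=> n n_ge8 /eqP n_mod4; set m := (n %/ 4)%N.
have En : n = (4 * m)%N by rewrite /m; lia.
exists (m%:R * (2 * m%:R + 2) / (2 * m%:R + 1)); split.
  by rewrite En; apply/(both_dims_fan hk)/fan_dim_0mod4; lia.
have -> : n%:R / 4 = m%:R :> R by rewrite En natrM; lra.
have -> : n.+2%:R / 4 = m%:R + 1 / 2 :> R by rewrite -addn2 natrD En natrM; lra.
exact: quarter_value_bounds (ler0n R m).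
Qed.
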